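(* Let $Q(z)$ be a $k\times k$ Hermite matrix of Laurent polynomials with $Q_{1,1}(z)\not\equiv0$ and $$\operatorname{len}(Q_{1,1})\le\operatorname{len}(Q_{2,2})\le\dots\le\operatorname{len}(Q_{k,k}).$$ Suppose $0\le s<k$ and $Q$ is diagonally dominant at each of its diagonal entries $1,\dots,s$ (no condition if $s=0$). Then there exists a $k\times k$ unimodular matrix $U(z)$ of Laurent polynomials such that $\widetilde Q(z):=U(z)Q(z)U^\star(z)$ is diagonally dominant at each of its diagonal entries $1,\dots,s+1$, and the top-left $(s+1)\times(s+1)$ submatrix of $\widetilde Q$ equals that of $Q$.
   Context: For a matrix $U(z)=\sum_k U_k z^k$ of Laurent polynomials, $U^\star(z):=\sum_k\overline{U_k}^T z^{-k}$; Hermite means $A^\star=A$. A square matrix of Laurent polynomials is unimodular if its determinant is a nonzero monomial $cz^m$ ($c\neq0$). For a Laurent polynomial $u\not\equiv0$: $\deg(u)$ is its highest degree, $\operatorname{ldeg}(u)$ its lowest degree, $\operatorname{len}(u):=\deg(u)-\operatorname{ldeg}(u)$, and $\operatorname{fs}(u):=[\operatorname{ldeg}(u),\deg(u)]$ (an integer interval); for $u\equiv0$, $\operatorname{len}(u):=-\infty$, $\deg(u):=-\infty$ and $\operatorname{fs}(u):=\emptyset$. A $k\times k$ matrix $Q(z)$ of Laurent polynomials is diagonally dominant at the diagonal entry $s$ if (1) for all $i\ne s$: $\operatorname{fs}(Q_{i,s})\subsetneq\operatorname{fs}(Q_{s,s})$ and $\operatorname{fs}(Q_{s,i})\subsetneq\operatorname{fs}(Q_{s,s})$;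 and (2) for all $i>s$: $\deg(Q_{s,i})<\deg(Q_{s,s})$. $Q$ is diagonally dominant if it is diagonally dominant at every diagonal entry. *)

(* Laurent polynomials over C (any numClosedFieldType, e.g. the
   complex numbers) are represented inside the fraction field of {poly C}
   as elements of the form p(z) * z^a (p a polynomial, a an integer). *)
From HB Require Import structures.
From mathcomp Require Import all_boot all_order all_algebra.
Set Implicit Arguments. Unset Strict Implicit. Unset Printing Implicit Defensive.
Import Order.TTheory GRing.Theory Num.Theory.
Local Open Scope ring_scope.

Section Laurent.
Variable C : numClosedFieldType.

Definition LF := {fraction {poly C}}.
Definition toLF (p : {poly C}) : LF := FracField.tofrac p.

Definition Xf : LF := toLF 'X.

Definition lp (p : {poly C}) (a : int) : LF := toLF p * Xf ^ a.

(* its star: conj(p)(z^-1) * z^-a, i.e. sum_j conj(c_j) z^-j if p z^a = sum_j c_j z^j *)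
Definition lpstar (p : {poly C}) (a : int) : LF :=
  (map_poly (fun c => toLF (Num.conj c)%:P) p).[Xf^-1] * Xf ^ (- a).

Definition lstar (f g : LF) : Prop := exists p a, f = lp p a /\ g = lpstar p a.

Definition mxstar k (A B : 'M[LF]_k) : Prop := forall i j, lstar (A j i) (B i j).

Definition hermite k (A : 'M[LF]_k) : Prop := mxstar A A.

Definition unimodular k (U : 'M[LF]_k) : Prop :=
  exists (c : C) (m : int), c != 0 /\ \det U = toLF c%:P * Xf ^ m.

(* fs(f) = [a, b]: f = sum_{j=a}^b c_j z^j with c_a <> 0 and c_b <> 0 *)
Definition fs_is (f : LF) (a b : int) : Prop :=
  exists p : {poly C}, [/\ p`_0 != 0, (size p)%:Z = b - a + 1 & f = lp p a].

(* j \in fs(f)   (fs(0) is empty) *)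
Definition in_fs (f : LF) (j : int) : Prop := exists a b, fs_is f a b /\ a <= j <= b.

Definition fs_ssub (u v : LF) : Prop :=
  (forall j, in_fs u j -> in_fs v j) /\ exists j, in_fs v j /\ ~ in_fs u j.

Definition deg_is (f : LF) (n : int) : Prop := exists a, fs_is f a n.

(* deg(u) < deg(v), with deg(0) = -oo *)
Definition deg_lt (u v : LF) : Prop :=
  exists n, deg_is v n /\ (u = 0 \/ exists m, deg_is u m /\ m < n).

Definition len_is (f : LF) (l : int) : Prop := exists a b, fs_is f a b /\ l = b - a.

(* len(u) <= len(v), with len(0) = -oo *)
Definition len_le (u v : LF) : Prop :=
  u = 0 \/ exists l m, [/\ len_is u l, len_is v m & l <= m].

Definition diag_dom_at k (Q : 'M[LF]_k) (d : 'I_k) : Prop :=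
  (forall i : 'I_k, i != d -> fs_ssub (Q i d) (Q d d) /\ fs_ssub (Q d i) (Q d d)) /\
  (forall i : 'I_k, (d < i)%N -> deg_lt (Q d i) (Q d d)).

End Laurent.

(* Since Q is Hermite, its diagonal entries are self-star, so fs(Q_dd) = [-n_d, n_d],
   and n_d is nondecreasing by the length hypothesis.  Dominance at the first s entries
   makes the leading (s+1)x(s+1) block a set of pivot rows: row d reaches the degrees
   +-n_d only on the diagonal, its other entries stay inside the windows [-n_j, n_j] of
   their columns, strictly below degree n_d right of the diagonal and strictly above
   -n_j left of it.  Every later row can therefore be divided by these pivot rows (top
   coefficients cleared from right to left, bottom ones from left to right) until its
   entry in each leading column j lies in [-n_j + 1, n_j].  Performing the matching column
   operations with the starred multipliers is a unimodular congruence that fixes the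
   leading block, and the new entries (i, d), (d, i) have supports in [-n_d + 1, n_d] and
   [-n_d, n_d - 1], strictly inside fs(Q_dd). *)

From HB Require Import structures.
From mathcomp Require Import all_boot all_order all_algebra.
From mathcomp Require Import zify.
From Stdlib Require Import ClassicalEpsilon.
Import Order.TTheory GRing.Theory Num.Theory.
Local Open Scope ring_scope.
Set Implicit Arguments. Unset Strict Implicit. Unset Printing Implicit Defensive.

Lemma sum_ord_eq_nat (V : nmodType) n (F : nat -> V) (m : int) :
  \sum_(i < n) (if m == i%:Z then F i else 0) =
  if (0 <= m) && (absz m < n)%N then F (absz m) else 0.
Proof.
case: ifP => [/andP [m_ge0 mn] | hm].
  rewrite (bigD1 (Ordinal mn)) //= big1 ?addr0; first by rewrite gez0_abs // eqxx.
  move=> i /eqP ne; case: eqP => // e; case: ne; apply: val_inj => /=; lia.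
by rewrite big1 // => i _; case: eqP => // e; move: hm; rewrite e /= ltn_ord.
Qed.

Lemma poly_factor_Xn (R : idomainType) (p : {poly R}) : p != 0 ->
  exists (q : {poly R}) (m : nat), q`_0 != 0 /\ p = q * 'X^m.
Proof.
move=> pn0; have [m [q qr ep]] := multiplicity_XsubC p 0.
move: qr; rewrite pn0 /= /root horner_coef0 => qr.
by exists q, m; split => //; move: ep; rewrite polyC0 subr0.
Qed.

Section Laurent.
Variable C : numClosedFieldType.
Local Notation L := (LF C).
Local Notation toLF := (@toLF C).
Local Notation Xf := (@Xf C).
Local Notation lp := (@lp C).
Local Notation lpstar := (@lpstar C).

(* The coefficient map of [lpstar], written as a composite of ring morphisms so that
   [map_poly conjLF] is canonically one. *)
Definition conjLF := ((@FracField.tofrac _) \o polyC \o (@Num.conj C))%FUN.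

Lemma lpstarE p a : lpstar p a = (map_poly conjLF p).[Xf^-1] * Xf ^ (- a).
Proof. by []. Qed.

Lemma toLF_inj : injective toLF.
Proof. by move=> p q /eqP; rewrite /toLF tofrac_eq => /eqP. Qed.

Lemma Xf_neq0 : Xf != 0.
Proof. by rewrite /Xf /toLF tofrac_eq0 polyX_eq0. Qed.

Lemma lp0 a : lp 0 a = 0.
Proof. by rewrite /lp /toLF rmorph0 mul0r. Qed.

Lemma lp1 : lp 1 0 = 1.
Proof. by rewrite /lp /toLF rmorph1 expr0z mulr1. Qed.

Lemma lpD p q a : lp (p + q) a = lp p a + lp q a.
Proof. by rewrite /lp /toLF rmorphD mulrDl. Qed.

Lemma lpN p a : lp (- p) a = - lp p a.
Proof. by rewrite /lp /toLF rmorphN mulNr. Qed.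

Lemma lpM p q a b : lp p a * lp q b = lp (p * q) (a + b).
Proof. by rewrite /lp /toLF rmorphM expfzDr ?Xf_neq0 // mulrACA. Qed.

Lemma lp_eq0 p a : (lp p a == 0) = (p == 0).
Proof. by rewrite /lp mulf_eq0 (negbTE (expfz_neq0 _ Xf_neq0)) orbF tofrac_eq0. Qed.

Lemma lp_mulXn p a (n : nat) : lp (p * 'X^n) (a - n%:Z) = lp p a.
Proof.
rewrite /lp /toLF /Xf rmorphM rmorphXn /= exprnP -mulrA -expfzDr ?Xf_neq0 //.
by congr (_ * (_ ^ _)); lia.
Qed.

Lemma lp_rebase p a m : m <= a -> lp p a = lp (p * 'X^(absz (a - m))) m.
Proof.
move=> ma; rewrite -{1}(lp_mulXn p a (absz (a - m))); congr lp; lia.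
Qed.

Lemma lp_eq_mulXn p q a b : lp p a = lp q b -> b <= a -> q = p * 'X^(absz (a - b)).
Proof.
move=> e ba; move: e; rewrite (lp_rebase p ba) /lp.
by move=> /(congr1 (fun x => x / Xf ^ b)); rewrite !mulfK ?expfz_neq0 ?Xf_neq0 // => /toLF_inj.
Qed.

Definition coefz (p : {poly C}) (a j : int) : C := if a <= j then p`_(absz (j - a)) else 0.

Lemma coefz_mulXn p a (n : nat) j : coefz (p * 'X^n) (a - n%:Z) j = coefz p a j.
Proof.
rewrite /coefz coefMXn; case: (lerP a j) => h1.
  have -> : (a - n%:Z <= j)%R by lia.
  have -> : (absz (j - (a - n%:Z))%R < n)%N = false by lia.
  by congr (p`_ _); lia.
by case: ifP => // h2; have -> : (absz (j - (a - n%:Z))%R < n)%N = true by lia.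
Qed.

Lemma coefz_eq p q a b : lp p a = lp q b -> coefz p a =1 coefz q b.
Proof.
wlog ba : p q a b / b <= a.
  move=> W e j; case: (lerP b a) => h; first exact: W.
  by symmetry; apply: W => //; apply: ltW.
move=> e j; rewrite (lp_eq_mulXn e ba) -(coefz_mulXn p a (absz (a - b))).
by congr coefz; lia.
Qed.

Lemma lpstar_eq p q a b : lp p a = lp q b -> lpstar p a = lpstar q b.
Proof.
wlog ba : p q a b / b <= a.
  move=> W e; case: (lerP b a) => h; first exact: W.
  by symmetry; apply: W => //; apply: ltW.
move=> e; rewrite (lp_eq_mulXn e ba) !lpstarE rmorphM /= map_polyXn hornerM hornerXn.
rewrite -mulrA exprnP exprz_inv -expfzDr ?Xf_neq0 //; congr (_ * _ ^ _); lia.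
Qed.

Definition laurent (f : L) := exists p a, f = lp p a.

(* A chosen representation [f = lp p a] of a Laurent polynomial; coefficients
   and the star operation do not depend on the choice. *)
Definition lrep (f : L) : {poly C} * int :=
  epsilon (inhabits (0, 0)) (fun pa => f = lp pa.1 pa.2).

Lemma lrepE f : laurent f -> f = lp (lrep f).1 (lrep f).2.
Proof.
move=> [p [a e]].
exact: (epsilon_spec (inhabits (0,0)) (fun pa => f = lp pa.1 pa.2) (ex_intro _ (p, a) e)).
Qed.

Definition lcoef (f : L) (j : int) : C := coefz (lrep f).1 (lrep f).2 j.

Definition starf (f : L) : L := lpstar (lrep f).1 (lrep f).2.

Lemma laurent_lp p a : laurent (lp p a). Proof. by exists p, a. Qed.

Lemma lcoef_lp p a : lcoef (lp p a) =1 coefz p a.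
Proof. by rewrite /lcoef; apply: coefz_eq; rewrite -lrepE //; apply: laurent_lp. Qed.

Lemma starf_lp p a : starf (lp p a) = lpstar p a.
Proof. by rewrite /starf; apply: lpstar_eq; rewrite -lrepE //; apply: laurent_lp. Qed.

Lemma lstarP f g : lstar f g <-> laurent f /\ g = starf f.
Proof.
split; first by move=> [p [a [-> ->]]]; rewrite starf_lp; split => //; apply: laurent_lp.
by move=> [[p [a ->]] ->]; exists p, a; rewrite starf_lp.
Qed.

Lemma laurent0 : laurent 0. Proof. by exists 0, 0; rewrite lp0. Qed.
Lemma laurent1 : laurent 1. Proof. by exists 1, 0; rewrite lp1. Qed.

Lemma laurent_common_base f g : laurent f -> laurent g ->
  exists p q m, f = lp p m /\ g = lp q m.
Proof.
move=> [p [a ->]] [q [b ->]]; case: (lerP a b) => h.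
  by exists p, (q * 'X^(absz (b - a))), a; split => //; apply: lp_rebase.
by exists (p * 'X^(absz (a - b))), q, b; split => //; apply: lp_rebase; apply: ltW.
Qed.

Lemma laurentD f g : laurent f -> laurent g -> laurent (f + g).
Proof.
move=> hf hg; have [p [q [m [-> ->]]]] := laurent_common_base hf hg.
by rewrite -lpD; apply: laurent_lp.
Qed.

Lemma laurentN f : laurent f -> laurent (- f).
Proof. by move=> [p [a ->]]; rewrite -lpN; apply: laurent_lp. Qed.

Lemma laurentB f g : laurent f -> laurent g -> laurent (f - g).
Proof. by move=> hf hg; apply/laurentD/laurentN. Qed.

Lemma laurentM f g : laurent f -> laurent g -> laurent (f * g).
Proof. by move=> [p [a ->]] [q [b ->]]; rewrite lpM; apply: laurent_lp. Qed.

Lemma laurent_sum (I : Type) (r : seq I) (P : pred I) (F : I -> L) :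
  (forall i, P i -> laurent (F i)) -> laurent (\sum_(i <- r | P i) F i).
Proof. by move=> h; apply: big_ind => //; [exact: laurent0 | exact: laurentD]. Qed.

Lemma lcoef0 j : lcoef 0 j = 0.
Proof. by rewrite -(lp0 0) lcoef_lp /coefz coef0; case: ifP. Qed.

Lemma lcoefD f g j : laurent f -> laurent g -> lcoef (f + g) j = lcoef f j + lcoef g j.
Proof.
move=> hf hg; have [p [q [m [-> ->]]]] := laurent_common_base hf hg.
by rewrite -lpD !lcoef_lp /coefz coefD; case: ifP; rewrite ?addr0.
Qed.

Lemma lcoefN f j : laurent f -> lcoef (- f) j = - lcoef f j.
Proof.
by move=> [p [a ->]]; rewrite -lpN !lcoef_lp /coefz coefN; case: ifP; rewrite ?oppr0.
Qed.

Lemma lcoefB f g j : laurent f -> laurent g -> lcoef (f - g) j = lcoef f j - lcoef g j.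
Proof. by move=> hf hg; rewrite lcoefD ?lcoefN //; apply: laurentN. Qed.

Lemma lcoef_sum (I : Type) (r : seq I) (P : pred I) (F : I -> L) j :
  (forall i, P i -> laurent (F i)) ->
  lcoef (\sum_(i <- r | P i) F i) j = \sum_(i <- r | P i) lcoef (F i) j.
Proof.
move=> h; pose K x y := laurent x /\ lcoef x j = y.
suff [] : K (\sum_(i <- r | P i) F i) (\sum_(i <- r | P i) lcoef (F i) j) by [].
apply: (big_ind2 K); first by split; [exact: laurent0 | exact: lcoef0].
  by move=> x1 x2 y1 y2 [h1 <-] [h2 <-]; split; [apply: laurentD | rewrite lcoefD].
by move=> i Pi; split; [apply: h|].
Qed.

Definition monom (c : C) (e : int) : L := lp c%:P e.

Lemma laurent_monom c e : laurent (monom c e). Proof. exact: laurent_lp. Qed.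

Lemma lcoef_monom c e j : lcoef (monom c e) j = if j == e then c else 0.
Proof.
rewrite /monom lcoef_lp /coefz coefC; case: (lerP e j) => h.
  by congr (if _ then _ else _); apply/eqP/eqP; lia.
by case: eqP => // ?; lia.
Qed.

Lemma lcoef_monomM c e f j : laurent f -> lcoef (monom c e * f) j = c * lcoef f (j - e).
Proof.
move=> [p [a ->]]; rewrite /monom lpM !lcoef_lp /coefz coefCM.
have -> : (e + a <= j) = (a <= j - e) by apply/idP/idP => H; lia.
by case: ifP => h; [congr (_ * p`_ _); lia | rewrite mulr0].
Qed.

Lemma lpstar_monomE p a :
  lpstar p a = \sum_(i < size p) monom (Num.conj p`_i) (- i%:Z - a).
Proof.
rewrite lpstarE (horner_coef_wide _ (leqnn (size (map_poly conjLF p)))) mulr_suml.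
rewrite size_map_poly; apply: eq_bigr => i _.
by rewrite coef_map /= exprnP exprz_inv /monom /lp -mulrA -expfzDr ?Xf_neq0.
Qed.

Lemma laurent_starf f : laurent f -> laurent (starf f).
Proof.
by move=> [p [a ->]]; rewrite starf_lp lpstar_monomE; apply: laurent_sum => *; apply: laurent_monom.
Qed.

Lemma lcoef_starf f j : laurent f -> lcoef (starf f) j = Num.conj (lcoef f (- j)).
Proof.
move=> [p [a ->]]; rewrite starf_lp lpstar_monomE lcoef_sum => [|*]; last exact: laurent_monom.
under eq_bigr => i _ do rewrite lcoef_monom.
transitivity (\sum_(i < size p) (if - j - a == i%:Z then Num.conj p`_i else 0)).
  by apply: eq_bigr => i _; congr (if _ then _ else _); apply/eqP/eqP; lia.
rewrite (sum_ord_eq_nat _ (fun i => Num.conj p`_i)) lcoef_lp /coefz.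
have -> : (a <= - j) = (0 <= - j - a) by apply/idP/idP; lia.
case: (lerP 0 (- j - a)) => h /=; last by rewrite conjC0.
by case: ifP => h2 //; rewrite nth_default ?conjC0 //; lia.
Qed.

Lemma starf0 : starf 0 = 0.
Proof. by rewrite -{1}(lp0 0) starf_lp lpstarE rmorph0 horner0 mul0r. Qed.

Lemma starf1 : starf 1 = 1.
Proof.
rewrite -{1}lp1 starf_lp lpstarE map_polyC /= hornerC oppr0 expr0z mulr1.
by rewrite /conjLF /= conjC1 !rmorph1.
Qed.

Lemma starfM f g : laurent f -> laurent g -> starf (f * g) = starf f * starf g.
Proof.
move=> [p [a ->]] [q [b ->]]; rewrite lpM !starf_lp !lpstarE rmorphM hornerM.
by rewrite opprD expfzDr ?Xf_neq0 // mulrACA.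
Qed.

Lemma starfD f g : laurent f -> laurent g -> starf (f + g) = starf f + starf g.
Proof.
move=> hf hg; have [p [q [m [-> ->]]]] := laurent_common_base hf hg.
by rewrite -lpD !starf_lp !lpstarE rmorphD hornerD mulrDl.
Qed.

Lemma starfN f : laurent f -> starf (- f) = - starf f.
Proof. by move=> [p [a ->]]; rewrite -lpN !starf_lp !lpstarE rmorphN hornerN mulNr. Qed.

Lemma starfB f g : laurent f -> laurent g -> starf (f - g) = starf f - starf g.
Proof. by move=> hf hg; rewrite starfD ?starfN //; apply: laurentN. Qed.

Lemma starf_sum (I : Type) (r : seq I) (P : pred I) (F : I -> L) :
  (forall i, P i -> laurent (F i)) ->
  starf (\sum_(i <- r | P i) F i) = \sum_(i <- r | P i) starf (F i).
Proof.
move=> h; pose K x y := laurent x /\ starf x = y.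
suff [] : K (\sum_(i <- r | P i) F i) (\sum_(i <- r | P i) starf (F i)) by [].
apply: (big_ind2 K); first by split; [exact: laurent0 | exact: starf0].
  by move=> x1 x2 y1 y2 [h1 <-] [h2 <-]; split; [apply: laurentD | rewrite starfD].
by move=> i Pi; split; [apply: h|].
Qed.

Definition vanish_above (f : L) (h : int) := forall x : int, h < x -> lcoef f x = 0.
Definition vanish_below (f : L) (h : int) := forall x : int, x < h -> lcoef f x = 0.

Lemma vanish_above_le f h h' : h <= h' -> vanish_above f h -> vanish_above f h'.
Proof. by move=> hh' hf x hx; apply: hf; lia. Qed.

Lemma vanish_below_le f h h' : h' <= h -> vanish_below f h -> vanish_below f h'.
Proof. by move=> hh' hf x hx; apply: hf; lia. Qed.

Lemma vanish_below_starf f h : laurent f -> vanish_above f h -> vanish_below (starf f) (- h).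
Proof. by move=> hf fh x hx; rewrite lcoef_starf // fh ?conjC0 //; lia. Qed.

Lemma vanish_above_starf f h : laurent f -> vanish_below f h -> vanish_above (starf f) (- h).
Proof. by move=> hf fh x hx; rewrite lcoef_starf // fh ?conjC0 //; lia. Qed.

Lemma fs_is_lcoef (f : L) a b : fs_is f a b ->
  [/\ laurent f, a <= b, lcoef f a != 0, lcoef f b != 0 &
      vanish_below f a /\ vanish_above f b].
Proof.
move=> [p [p0 sz ->]].
have szp : (0 < size p)%N by rewrite size_poly_gt0; apply: contraNneq p0 => ->; rewrite coef0.
split; first exact: laurent_lp.
- lia.
- by rewrite lcoef_lp /coefz lexx subrr.
- rewrite lcoef_lp /coefz; have -> : a <= b by lia.
  have -> : absz (b - a) = (size p).-1 by lia.
  by rewrite -lead_coefE lead_coef_eq0 -size_poly_gt0.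
split=> x hx; rewrite lcoef_lp /coefz; case: ifP => // h; first by exfalso; lia.
by rewrite nth_default //; change (size p <= absz (x - a))%N; lia.
Qed.

Lemma fs_is_neq0 (f : L) a b : fs_is f a b -> f != 0.
Proof.
by move=> /fs_is_lcoef[_ _ fa _ _]; apply: contraNneq fa => ->; rewrite lcoef0.
Qed.

Lemma fs_is_uniq (f : L) a b a' b' : fs_is f a b -> fs_is f a' b' -> a = a' /\ b = b'.
Proof.
move=> /fs_is_lcoef[_ _ fa fb [lo hi]] /fs_is_lcoef[_ _ fa' fb' [lo' hi']].
have e1 : a <= a' by case: (lerP a a') => // h; move: fa'; rewrite lo ?eqxx.
have e2 : a' <= a by case: (lerP a' a) => // h; move: fa; rewrite lo' ?eqxx.
have e3 : b <= b' by case: (lerP b b') => // h; move: fb; rewrite hi' ?eqxx.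
have e4 : b' <= b by case: (lerP b' b) => // h; move: fb'; rewrite hi ?eqxx.
split; lia.
Qed.

Lemma laurent_fs f : laurent f -> f != 0 -> exists a b, fs_is f a b.
Proof.
move=> [p [a ->]]; rewrite lp_eq0 => /poly_factor_Xn[q [m [q0 ->]]].
exists (a + m%:Z), (a + m%:Z + (size q)%:Z - 1), q; split => //.
  by rewrite addrAC subrK addrAC subrr add0r.
by rewrite -(lp_mulXn (q : {poly C}) (a + m%:Z) m) addrK.
Qed.

Lemma lcoef_finite_support f : laurent f ->
  exists N : nat, vanish_above f N%:Z /\ vanish_below f (- N%:Z).
Proof.
move=> [p [a ->]]; exists (absz a + size p)%N.
split=> x hx; rewrite lcoef_lp /coefz; case: ifP => // h; last by exfalso; lia.
by rewrite nth_default //; change (size p <= absz (x - a))%N; lia.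
Qed.

Lemma vanish_fs_ssub (f v : L) lo hi a b : laurent f ->
  vanish_below f lo -> vanish_above f hi -> fs_is v a b ->
  a <= lo -> hi <= b -> (a < lo) || (hi < b) -> fs_ssub f v.
Proof.
move=> hf flo fhi hv alo hib strict.
have ab : a <= b by have [] := fs_is_lcoef hv.
have inside a' b' : fs_is f a' b' -> lo <= a' /\ b' <= hi.
  move=> /fs_is_lcoef[_ _ fa fb _]; split.
    by case: (lerP lo a') => // h; move: fa; rewrite flo ?eqxx.
  by case: (lerP b' hi) => // h; move: fb; rewrite fhi ?eqxx.
split.
  by move=> j [a' [b' [/inside [? ?] ?]]]; exists a, b; split => //; lia.
have [j ab_j nf_j] : exists2 j, a <= j <= b & ~ (lo <= j <= hi).
  by case/orP: strict => h; [exists a | exists b]; lia.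
exists j; split; first by exists a, b.
by move=> [a' [b' [/inside [? ?] ?]]]; lia.
Qed.

Lemma fs_ssub_vanish (u v : L) a b : laurent u -> fs_ssub u v -> fs_is v a b ->
  vanish_below u a /\ vanish_above u b.
Proof.
move=> hu [sub _] hv; have [->|nz] := eqVneq u 0.
  by split=> x _; apply: lcoef0.
have [a' [b' hf]] := laurent_fs hu nz; have [_ ab' _ _ [lo hi]] := fs_is_lcoef hf.
have [a2 [b2 [h2 r2]]] : in_fs v a' by apply: sub; exists a', b'; split => //; lia.
have [a3 [b3 [h3 r3]]] : in_fs v b' by apply: sub; exists a', b'; split => //; lia.
have [? ?] := fs_is_uniq hv h2; have [? ?] := fs_is_uniq hv h3.
by split; [apply: vanish_below_le lo | apply: vanish_above_le hi]; lia.
Qed.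

Lemma vanish_deg_lt (f v : L) hi a b : laurent f ->
  vanish_above f hi -> fs_is v a b -> hi < b -> deg_lt f v.
Proof.
move=> hf fhi hv hib; exists b; split; first by exists a.
have [->|nz] := eqVneq f 0; [by left | right].
have [a' [b' hfs]] := laurent_fs hf nz; exists b'; split; first by exists a'.
have [_ _ _ fb _] := fs_is_lcoef hfs.
by case: (lerP b' hi) => // h; [lia | move: fb; rewrite fhi ?eqxx].
Qed.

Lemma deg_lt_vanish (u v : L) a b : deg_lt u v -> fs_is v a b -> vanish_above u (b - 1).
Proof.
move=> [n [[a' hn] [->|[m [[a2 hm] lt]]]]] hv x hx; first exact: lcoef0.
have [_ ebn] := fs_is_uniq hv hn; have [_ _ _ _ [_ hi]] := fs_is_lcoef hm.
by apply: hi; lia.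
Qed.

Lemma fs_ssub_widen (u v w : L) a b a' b' : fs_ssub u v -> fs_is v a b -> fs_is w a' b' ->
  a' <= a -> b <= b' -> fs_ssub u w.
Proof.
move=> [sub [j0 [v0 u0]]] hv hw h1 h2.
have vw j : in_fs v j -> in_fs w j.
  by move=> [a2 [b2 [h r]]]; have [? ?] := fs_is_uniq hv h; exists a', b'; split => //; lia.
by split; [move=> j /sub /vw | exists j0; split => //; apply: vw].
Qed.

Lemma fs_is_selfstar (f : L) a b : f = starf f -> fs_is f a b -> a = - b.
Proof.
move=> ff hab; have [hf _ fa fb [lo hi]] := fs_is_lcoef hab.
have hc x : lcoef f x = Num.conj (lcoef f (- x)) by rewrite {1}ff lcoef_starf.
have e1 : a <= - b.
  by case: (lerP a (- b)) => // h; move: fb; rewrite hc lo ?conjC0 ?eqxx.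
have e2 : - a <= b.
  by case: (lerP (- a) b) => // h; move: fa; rewrite hc hi ?conjC0 ?eqxx.
lia.
Qed.

End Laurent.

Section Reduction.
Variable C : numClosedFieldType.
Local Notation L := (LF C).
Variables (k s : nat) (P : 'I_k -> 'I_k -> L) (n : 'I_k -> int).
Hypothesis s_lt_k : (s < k)%N.
Hypothesis P_laurent : forall i j, laurent (P i j).
Hypothesis n_ge0 : forall d : 'I_k, (d <= s)%N -> 0 <= n d.
Hypothesis n_mono : forall d j : 'I_k, (d <= j)%N -> (j <= s)%N -> n d <= n j.
Hypothesis pivot_top : forall d : 'I_k, (d <= s)%N -> lcoef (P d d) (n d) != 0.
Hypothesis pivot_bot : forall d : 'I_k, (d <= s)%N -> lcoef (P d d) (- n d) != 0.
Hypothesis P_above : forall d j : 'I_k, (d <= s)%N -> (j <= s)%N ->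
  vanish_above (P d j) (n j).
Hypothesis P_above_upper : forall d j : 'I_k, (d < j)%N -> (j <= s)%N ->
  vanish_above (P d j) (n d - 1).
Hypothesis P_below : forall d j : 'I_k, (d <= s)%N -> (j <= s)%N ->
  vanish_below (P d j) (- n j).
Hypothesis P_below_lower : forall d j : 'I_k, (j < d)%N -> (d <= s)%N ->
  vanish_below (P d j) (- n j + 1).

Definition laurent_row (v : 'I_k -> L) := forall j, laurent (v j).

Definition sub_rows (v u : 'I_k -> L) j := v j - \sum_(l < k | (l <= s)%N) u l * P l j.

Definition reduces_to (v w : 'I_k -> L) :=
  exists2 u : 'I_k -> L, (forall l, laurent (u l)) & forall j, w j = sub_rows v u j.

Definition reduced (w : 'I_k -> L) := forall j : 'I_k, (j <= s)%N ->
  vanish_above (w j) (n j) /\ vanish_below (w j) (- n j + 1).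

Lemma reduces_to_refl v : reduces_to v v.
Proof.
exists (fun _ => 0) => [l|j]; first exact: laurent0.
by rewrite /sub_rows big1 ?subr0 // => l _; rewrite mul0r.
Qed.

Lemma reduces_to_trans u v w : reduces_to u v -> reduces_to v w -> reduces_to u w.
Proof.
move=> [a ha ea] [b hb eb]; exists (fun l => a l + b l) => [l|j].
  exact: laurentD.
rewrite eb /sub_rows ea /sub_rows.
under [X in _ = _ - X]eq_bigr => l _ do rewrite mulrDl.
by rewrite big_split /= opprD addrA.
Qed.

Lemma laurent_sub_rows v u : laurent_row v -> (forall l, laurent (u l)) ->
  laurent_row (sub_rows v u).
Proof. by move=> hv hu j; apply: laurentB => //; apply: laurent_sum => l _; apply: laurentM. Qed.

Lemma reduces_to_laurent v w : laurent_row v -> reduces_to v w -> laurent_row w.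
Proof. by move=> hv [u hu e] j; rewrite e; apply: laurent_sub_rows. Qed.

Lemma reduces_to_sub_monom v (m : 'I_k) c e : (m <= s)%N ->
  reduces_to v (fun j => v j - monom c e * P m j).
Proof.
move=> ms; exists (fun l => if l == m then monom c e else 0) => [l|j].
  by case: ifP => _; [exact: laurent_monom | exact: laurent0].
rewrite /sub_rows (bigD1 m) //= eqxx big1 ?addr0 //.
by move=> l /andP [_ /negbTE ->]; rewrite mul0r.
Qed.

Lemma lcoef_sub_monom v (m : 'I_k) c e j x : laurent_row v ->
  lcoef (v j - monom c e * P m j) x = lcoef (v j) x - c * lcoef (P m j) (x - e).
Proof. by move=> hv; rewrite lcoefB ?lcoef_monomM //; apply/laurentM/P_laurent/laurent_monom. Qed.

(* Columns are cleared at degree [n j + t + 1] from right to left: a shifted row [m]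
   has degree [< n m + t + 1 <= n j + t + 1] in every column [j > m]. *)
Lemma cancel_top_coefs (t c : nat) v : laurent_row v ->
  (forall j : 'I_k, (j <= s)%N -> vanish_above (v j) (n j + t%:Z + 1)) ->
  (forall j : 'I_k, (j <= s)%N -> (c <= j)%N -> lcoef (v j) (n j + t%:Z + 1) = 0) ->
  exists2 w, reduces_to v w & forall j : 'I_k, (j <= s)%N -> vanish_above (w j) (n j + t%:Z).
Proof.
elim: c v => [|c IH] v hv v_above v_top.
  exists v => [|j js x hx]; first exact: reduces_to_refl.
  have [->|?] := eqVneq x (n j + t%:Z + 1); first exact: v_top.
  by apply: v_above => //; lia.
have [sc|cs] := ltnP s c; first by apply: IH => // j js cj; exfalso; lia.
have ck : (c < k)%N by lia.
pose m := Ordinal ck.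
pose g := lcoef (v m) (n m + t%:Z + 1) / lcoef (P m m) (n m).
pose v1 j := v j - monom g (t%:Z + 1) * P m j.
have v_v1 : reduces_to v v1 by apply: reduces_to_sub_monom.
have [w v1_w w_above] : exists2 w, reduces_to v1 w &
    forall j : 'I_k, (j <= s)%N -> vanish_above (w j) (n j + t%:Z).
  apply: IH; first exact: reduces_to_laurent v_v1.
    move=> j js x hx; rewrite /v1 lcoef_sub_monom // v_above // P_above //; last lia.
    by rewrite mulr0 subr0.
  move=> j js cj; rewrite /v1 lcoef_sub_monom //.
  have [->|njm] := eqVneq j m.
    have -> : n m + t%:Z + 1 - (t%:Z + 1) = n m by lia.
    by rewrite divfK ?subrr // pivot_top.
  have mj : (m < j)%N by move: njm cj; rewrite -val_eqE /=; lia.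
  rewrite v_top // P_above_upper ?mulr0 ?subr0 //.
  by have := n_mono (ltnW mj) js; lia.
by exists w => //; apply: reduces_to_trans v_v1 v1_w.
Qed.

Lemma reduce_above (t : nat) v : laurent_row v ->
  (forall j : 'I_k, (j <= s)%N -> vanish_above (v j) (n j + t%:Z)) ->
  exists2 w, reduces_to v w & forall j : 'I_k, (j <= s)%N -> vanish_above (w j) (n j).
Proof.
elim: t v => [|t IH] v hv v_above.
  by exists v => [|j js]; [exact: reduces_to_refl | rewrite -[n j]addr0; apply: v_above].
have [w1 v_w1 w1_above] := @cancel_top_coefs t s.+1 v hv
  (fun j js x hx => v_above j js x ltac:(lia)) (fun j js sj => ltac:(exfalso; lia)).
have [w w1_w w_above] := IH w1 (reduces_to_laurent hv v_w1) w1_above.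
by exists w => //; apply: reduces_to_trans v_w1 w1_w.
Qed.

(* Mirror image of [cancel_top_coefs]: the columns are cleared at degree [- n j - t]
   from left to right, as a shifted row [m] vanishes at that degree in every column
   [j < m]. *)
Lemma cancel_bottom_coefs (t r : nat) v : laurent_row v ->
  (forall j : 'I_k, (j <= s)%N -> vanish_above (v j) (n j)) ->
  (forall j : 'I_k, (j <= s)%N -> vanish_below (v j) (- n j - t%:Z)) ->
  (forall j : 'I_k, (j + r <= s)%N -> lcoef (v j) (- n j - t%:Z) = 0) ->
  exists2 w, reduces_to v w & forall j : 'I_k, (j <= s)%N ->
    vanish_above (w j) (n j) /\ vanish_below (w j) (- n j - t%:Z + 1).
Proof.
elim: r v => [|r IH] v hv v_above v_below v_bot.
  exists v => [|j js]; first exact: reduces_to_refl.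
  split=> [|x hx]; first exact: v_above.
  have [->|?] := eqVneq x (- n j - t%:Z); first by apply: v_bot; rewrite addn0.
  by apply: v_below => //; lia.
have [sr|rs] := ltnP s r; first by apply: IH => // j jr; exfalso; lia.
have mk : (s - r < k)%N by lia.
pose m := Ordinal mk.
have ms : (m <= s)%N by rewrite /= leq_subr.
pose g := lcoef (v m) (- n m - t%:Z) / lcoef (P m m) (- n m).
pose v1 j := v j - monom g (- t%:Z) * P m j.
have v_v1 : reduces_to v v1 by apply: reduces_to_sub_monom.
have [w v1_w w_bounds] : exists2 w, reduces_to v1 w & forall j : 'I_k, (j <= s)%N ->
    vanish_above (w j) (n j) /\ vanish_below (w j) (- n j - t%:Z + 1).
  apply: IH; first exact: reduces_to_laurent v_v1.
  - move=> j js x hx; rewrite /v1 lcoef_sub_monom // v_above // P_above //; last lia.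
    by rewrite mulr0 subr0.
  - move=> j js x hx; rewrite /v1 lcoef_sub_monom // v_below // P_below //; last lia.
    by rewrite mulr0 subr0.
  move=> j jr; rewrite /v1 lcoef_sub_monom //.
  have [->|njm] := eqVneq j m.
    have -> : - n m - t%:Z - - t%:Z = - n m by lia.
    by rewrite divfK ?subrr // pivot_bot.
  have jm : (j < m)%N by move: njm jr; rewrite -val_eqE /=; lia.
  rewrite v_bot; last by move: njm jr; rewrite -val_eqE /=; lia.
  by rewrite P_below_lower ?mulr0 ?subr0 //; lia.
by exists w => //; apply: reduces_to_trans v_v1 v1_w.
Qed.

Lemma reduce_below (t : nat) v : laurent_row v ->
  (forall j : 'I_k, (j <= s)%N -> vanish_above (v j) (n j)) ->
  (forall j : 'I_k, (j <= s)%N -> vanish_below (v j) (- n j + 1 - t%:Z)) ->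
  exists2 w, reduces_to v w & reduced w.
Proof.
elim: t v => [|t IH] v hv v_above v_below.
  exists v => [|j js]; first exact: reduces_to_refl.
  by split; [exact: v_above | rewrite -[_ + 1]subr0; apply: v_below].
have [w1 v_w1 w1_bounds] := @cancel_bottom_coefs t s.+1 v hv v_above
  (fun j js x hx => v_below j js x ltac:(lia)) (fun j sj => ltac:(exfalso; lia)).
have [w w1_w w_red] := IH w1 (reduces_to_laurent hv v_w1) (fun j js => (w1_bounds j js).1)
  (fun j js x hx => (w1_bounds j js).2 x ltac:(lia)).
by exists w => //; apply: reduces_to_trans v_w1 w1_w.
Qed.

Lemma row_finite_support v : laurent_row v -> exists N : nat,
  forall j, vanish_above (v j) N%:Z /\ vanish_below (v j) (- N%:Z).
Proof.
move=> hv; have [N hN] := fin_all_exists (fun j => lcoef_finite_support (hv j)).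
exists (\max_j N j)%N => j; have [above below] := hN j.
have Nj := leq_bigmax (F := N) j.
by split; [apply: vanish_above_le above | apply: vanish_below_le below]; lia.
Qed.

Lemma reduce_row v : laurent_row v -> exists2 w, reduces_to v w & reduced w.
Proof.
move=> hv; have [N hN] := row_finite_support hv.
have [w1 v_w1 w1_above] : exists2 w, reduces_to v w &
    forall j : 'I_k, (j <= s)%N -> vanish_above (w j) (n j).
  apply: (@reduce_above N v hv) => j js; apply: vanish_above_le (hN j).1.
  by have := n_ge0 js; lia.
have [N2 hN2] := row_finite_support (reduces_to_laurent hv v_w1).
have [w w1_w w_red] : exists2 w, reduces_to w1 w & reduced w.
  apply: (@reduce_below N2.+1 w1 (reduces_to_laurent hv v_w1) w1_above) => j js.
  by apply: vanish_below_le (hN2 j).2; have := n_ge0 js; lia.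
by exists w => //; apply: reduces_to_trans v_w1 w1_w.
Qed.

End Reduction.

Section EliminationMatrix.
Variables (C : numClosedFieldType) (k s : nat) (u : 'I_k -> 'I_k -> LF C).
Local Notation L := (LF C).

Definition elim_mx : 'M[L]_k := \matrix_(i, j)
  (if i == j then 1 else if (s < i)%N && (j <= s)%N then - u i j else 0).

Definition elim_mx_star : 'M[L]_k := \matrix_(i, j)
  (if i == j then 1 else if (s < j)%N && (i <= s)%N then - starf (u j i) else 0).

Lemma elim_mx_mul_entry (A : 'M[L]_k) i j : (elim_mx *m A) i j =
  if (s < i)%N then A i j - \sum_(l < k | (l <= s)%N) u i l * A l j else A i j.
Proof.
rewrite mxE; case: ifP => si.
  transitivity (\sum_l ((if l == i then A l j else 0) +
                        (if (l <= s)%N then - (u i l * A l j) else 0))).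
    apply: eq_bigr => l _; rewrite mxE eq_sym; case: eqP => [->|_].
      by rewrite leqNgt si /= mul1r addr0.
    by rewrite add0r si /=; case: ifP => _; rewrite ?mulNr ?mul0r.
  by rewrite big_split /= -big_mkcond big_pred1_eq -big_mkcond sumrN.
transitivity (\sum_l (if l == i then A l j else 0)); last by rewrite -big_mkcond big_pred1_eq.
apply: eq_bigr => l _; rewrite mxE eq_sym; case: eqP => [->|_]; first by rewrite mul1r.
by rewrite si /= mul0r.
Qed.

Lemma mul_elim_mx_star_entry (A : 'M[L]_k) i j : (A *m elim_mx_star) i j =
  if (s < j)%N then A i j - \sum_(l < k | (l <= s)%N) A i l * starf (u j l) else A i j.
Proof.
rewrite mxE; case: ifP => sj.
  transitivity (\sum_l ((if l == j then A i l else 0) +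
                        (if (l <= s)%N then - (A i l * starf (u j l)) else 0))).
    apply: eq_bigr => l _; rewrite mxE; case: eqP => [->|_].
      by rewrite leqNgt sj /= mulr1 addr0.
    by rewrite add0r sj /=; case: ifP => _; rewrite ?mulrN ?mulr0.
  by rewrite big_split /= -big_mkcond big_pred1_eq -big_mkcond sumrN.
transitivity (\sum_l (if l == j then A i l else 0)); last by rewrite -big_mkcond big_pred1_eq.
apply: eq_bigr => l _; rewrite mxE; case: eqP => [->|_]; first by rewrite mulr1.
by rewrite sj /= mulr0.
Qed.

Lemma elim_mx_unimodular : unimodular elim_mx.
Proof.
exists 1, 0; split; first exact: oner_neq0.
rewrite det_trig; last first.
  apply/is_trig_mxP => i j ij; rewrite mxE -val_eqE ltn_eqF //.
  by case: ifP => // /andP [si js]; lia.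
rewrite big1 => [|i _]; last by rewrite mxE eqxx.
by rewrite /toLF rmorph1 expr0z mulr1.
Qed.

Lemma elim_mx_mxstar : (forall i l, laurent (u i l)) -> mxstar elim_mx elim_mx_star.
Proof.
move=> u_laurent i j; apply/lstarP; rewrite !mxE eq_sym.
case: eqP => _; first by rewrite starf1; split => //; apply: laurent1.
case: ifP => _; last by rewrite starf0; split => //; apply: laurent0.
by rewrite starfN //; split => //; apply/laurentN.
Qed.

End EliminationMatrix.

Section HermiteReduction.
Variables (C : numClosedFieldType) (k s : nat) (Q : 'M[LF C]_k).
Local Notation L := (LF C).
Hypothesis Q_hermite : hermite Q.
Hypothesis Q_len : forall i j : 'I_k, (i <= j)%N -> len_le (Q i i) (Q j j).
Hypothesis s_lt_k : (s < k)%N.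
Hypothesis Q_dom : forall d : 'I_k, (d < s)%N -> diag_dom_at Q d.

Lemma hermite_laurent i j : laurent (Q i j).
Proof. by have /lstarP[] := Q_hermite j i. Qed.

Lemma hermite_starf i j : Q i j = starf (Q j i).
Proof. by have /lstarP[] := Q_hermite i j. Qed.

Lemma hermite_diag_fs :
  (forall i : 'I_k, nat_of_ord i = 0%N -> Q i i != 0) ->
  exists n : 'I_k -> int, forall d, fs_is (Q d d) (- n d) (n d).
Proof.
move=> Q00; suff /fin_all_exists : forall d, exists b, fs_is (Q d d) (- b) b by [].
move=> d; have k_gt0 : (0 < k)%N by lia.
have [Q0|[l [m [_ [a [b [hab _]]] _]]]] := @Q_len (Ordinal k_gt0) d (leq0n _).
  by move: (Q00 (Ordinal k_gt0) erefl); rewrite Q0 eqxx.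
by exists b; rewrite -(fs_is_selfstar (hermite_starf d d) hab).
Qed.

Variable n : 'I_k -> int.
Hypothesis Q_fs : forall d, fs_is (Q d d) (- n d) (n d).

Lemma n_ge0 d : 0 <= n d.
Proof. by have [_ ? _ _ _] := fs_is_lcoef (Q_fs d); lia. Qed.

Lemma n_mono (d j : 'I_k) : (d <= j)%N -> n d <= n j.
Proof.
move=> dj; case: (Q_len dj) => [Qd0|[l [m [[a [b [hd el]]] [a' [b' [hj em]]] lm]]]].
  by move: (fs_is_neq0 (Q_fs d)); rewrite Qd0 eqxx.
have [? ?] := fs_is_uniq (Q_fs d) hd; have [? ?] := fs_is_uniq (Q_fs j) hj; lia.
Qed.

Lemma Q_pivot_top d : lcoef (Q d d) (n d) != 0.
Proof. by have [] := fs_is_lcoef (Q_fs d). Qed.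

Lemma Q_pivot_bot d : lcoef (Q d d) (- n d) != 0.
Proof. by have [] := fs_is_lcoef (Q_fs d). Qed.

Lemma Q_above_upper (d j : 'I_k) : (d < j)%N -> (j <= s)%N -> vanish_above (Q d j) (n d - 1).
Proof. by move=> dj js; apply: deg_lt_vanish ((Q_dom _).2 j dj) (Q_fs d); lia. Qed.

Lemma Q_below_lower (d j : 'I_k) : (j < d)%N -> (d <= s)%N -> vanish_below (Q d j) (- n j + 1).
Proof.
move=> jd ds; rewrite hermite_starf (_ : - n j + 1 = - (n j - 1)); last lia.
exact: vanish_below_starf (hermite_laurent j d) (Q_above_upper jd ds).
Qed.

Lemma Q_above (d j : 'I_k) : (d <= s)%N -> (j <= s)%N -> vanish_above (Q d j) (n j).
Proof.
move=> ds js; case: (ltngtP d j) => [dj|jd|/val_inj <-].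
- by apply: vanish_above_le (Q_above_upper dj js); have := n_mono (ltnW dj); lia.
- have js' : (j < s)%N by lia.
  have [Qjd _] := (Q_dom js').1 d ltac:(by rewrite -val_eqE /= gtn_eqF).
  exact: (fs_ssub_vanish (hermite_laurent d j) Qjd (Q_fs j)).2.
- by have [_ _ _ _ []] := fs_is_lcoef (Q_fs d).
Qed.

Lemma Q_below (d j : 'I_k) : (d <= s)%N -> (j <= s)%N -> vanish_below (Q d j) (- n j).
Proof.
move=> ds js; case: (ltngtP d j) => [dj|jd|/val_inj <-].
- have ds' : (d < s)%N by lia.
  have [_ Qdj] := (Q_dom ds').1 j ltac:(by rewrite -val_eqE /= gtn_eqF).
  apply: vanish_below_le (fs_ssub_vanish (hermite_laurent d j) Qdj (Q_fs d)).1.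
  by have := n_mono (ltnW dj); lia.
- by apply: vanish_below_le (Q_below_lower jd ds); lia.
- by have [_ _ _ _ []] := fs_is_lcoef (Q_fs d).
Qed.

Lemma rows_reduce : exists2 u : 'I_k -> 'I_k -> L, (forall i l, laurent (u i l)) &
  forall i, reduced s n (sub_rows s Q (Q i) (u i)).
Proof.
have [u hu] : exists u : 'I_k -> 'I_k -> L, forall i,
    (forall l, laurent (u i l)) /\ reduced s n (sub_rows s Q (Q i) (u i)).
  suff /fin_all_exists : forall i, exists ui : 'I_k -> L,
    (forall l, laurent (ui l)) /\ reduced s n (sub_rows s Q (Q i) ui) by [].
  move=> i.
  have [w [ui ui_laurent w_ui] w_red] := reduce_row s_lt_k hermite_laurent
    (fun d _ => n_ge0 d) (fun d j dj _ => n_mono dj) (fun d _ => Q_pivot_top d)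
    (fun d _ => Q_pivot_bot d) Q_above Q_above_upper Q_below Q_below_lower
    (hermite_laurent i).
  by exists ui; split => // j js; rewrite -w_ui; apply: w_red.
by exists u => [i l | i]; have [] := hu i.
Qed.

Variable u : 'I_k -> 'I_k -> L.
Hypothesis u_laurent : forall i l, laurent (u i l).
Hypothesis u_reduced : forall i, reduced s n (sub_rows s Q (Q i) (u i)).

Local Notation M := (elim_mx s u *m Q *m elim_mx_star s u).

Lemma elim_conj_top (i j : 'I_k) : (i <= s)%N -> (j <= s)%N -> M i j = Q i j.
Proof.
by move=> ils js; rewrite mul_elim_mx_star_entry elim_mx_mul_entry ltnNge js /= ltnNge ils.
Qed.

Lemma elim_conj_lower (i d : 'I_k) : (s < i)%N -> (d <= s)%N -> M i d = sub_rows s Q (Q i) (u i) d.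
Proof. by move=> si ds; rewrite mul_elim_mx_star_entry elim_mx_mul_entry ltnNge ds /= si. Qed.

Lemma laurent_elim_conj_lower (i d : 'I_k) : (s < i)%N -> (d <= s)%N -> laurent (M i d).
Proof.
move=> si ds; rewrite elim_conj_lower //.
by have := laurent_sub_rows s hermite_laurent (hermite_laurent i) (u_laurent i) d.
Qed.

Lemma elim_conj_upper (i d : 'I_k) : (s < i)%N -> (d <= s)%N -> M d i = starf (M i d).
Proof.
move=> si ds; rewrite (elim_conj_lower si ds) mul_elim_mx_star_entry si /sub_rows.
have sum_laurent : laurent (\sum_(l < k | (l <= s)%N) u i l * Q l d).
  by apply: laurent_sum => l _; apply: laurentM (u_laurent i l) (hermite_laurent l d).
rewrite (starfB (hermite_laurent i d) sum_laurent).
rewrite starf_sum => [|l _]; last exact: laurentM (u_laurent i l) (hermite_laurent l d).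
rewrite elim_mx_mul_entry ltnNge ds /= -hermite_starf; congr (_ - _).
apply: eq_bigr => l ls; rewrite elim_mx_mul_entry ltnNge ds /=.
by rewrite (starfM (u_laurent i l) (hermite_laurent l d)) -hermite_starf mulrC.
Qed.

Lemma elim_conj_dom_top (d i : 'I_k) : (d <= s)%N -> (i <= s)%N -> i != d ->
  fs_ssub (M i d) (M d d) /\ fs_ssub (M d i) (M d d).
Proof.
move=> ds ils id; rewrite !elim_conj_top //.
have [dls|sd] := ltnP d s; first exact: (Q_dom dls).1 i id.
have ids : (i < s)%N by move: id; rewrite -val_eqE /=; lia.
have [Qdi Qid] := (Q_dom ids).1 d ltac:(by rewrite eq_sym).
have ni := n_mono (ltnW (leq_trans ids sd)).
by split; apply: fs_ssub_widen (Q_fs i) (Q_fs d) _ _; rewrite ?Qdi ?Qid //; lia.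
Qed.

(* The reduced entries live in [-n d + 1, n d] and their stars in [-n d, n d - 1]:
   both strictly inside [fs(Q d d) = [-n d, n d]]. *)
Lemma elim_conj_dom_lower (d i : 'I_k) : (d <= s)%N -> (s < i)%N ->
  [/\ fs_ssub (M i d) (M d d), fs_ssub (M d i) (M d d) & deg_lt (M d i) (M d d)].
Proof.
move=> ds si; rewrite (elim_conj_top ds ds) (elim_conj_upper si ds).
have Mid := laurent_elim_conj_lower si ds.
have [above below] := u_reduced i ds; rewrite -elim_conj_lower // in above below.
have below' := vanish_below_starf Mid above; have above' := vanish_above_starf Mid below.
split.
- by apply: vanish_fs_ssub below above (Q_fs d) _ _ _ => //; lia.
- apply: vanish_fs_ssub (laurent_starf Mid) below' above' (Q_fs d) _ _ _ => //;
    rewrite ?opprD ?opprK; lia.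
- by apply: vanish_deg_lt (laurent_starf Mid) above' (Q_fs d) _; lia.
Qed.

Lemma elim_conj_diag_dom (d : 'I_k) : (d <= s)%N -> diag_dom_at M d.
Proof.
move=> ds; split=> i; have [ils|si] := leqP i s.
- exact: elim_conj_dom_top.
- by have [] := elim_conj_dom_lower ds si.
- by move=> di; rewrite !elim_conj_top //; apply: (Q_dom (leq_trans di ils)).2.
- by have [] := elim_conj_dom_lower ds si.
Qed.

End HermiteReduction.

Theorem lemma4p2 (C : numClosedFieldType) (k s : nat) (Q : 'M[LF C]_k)
  (hQ : hermite Q)
  (h11 : forall i : 'I_k, nat_of_ord i = 0%N -> Q i i != 0)
  (hlen : forall i j : 'I_k, (i <= j)%N -> len_le (Q i i) (Q j j))
  (hs : (s < k)%N)
  (hdd : forall d : 'I_k, (d < s)%N -> diag_dom_at Q d) :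
  exists U Ustar : 'M[LF C]_k,
    [/\ mxstar U Ustar, unimodular U,
        (forall d : 'I_k, (d <= s)%N -> diag_dom_at (U *m Q *m Ustar) d) &
        (forall i j : 'I_k, (i <= s)%N -> (j <= s)%N -> (U *m Q *m Ustar) i j = Q i j)].
Proof.
have [n Q_fs] := hermite_diag_fs hQ hlen hs h11.
have [u u_laurent u_reduced] := rows_reduce hQ hlen hs hdd Q_fs.
exists (elim_mx s u), (elim_mx_star s u); split.
- exact: elim_mx_mxstar.
- exact: elim_mx_unimodular.
- exact: elim_conj_diag_dom.
- exact: elim_conj_top.
Qed.
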